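(* Let $\mathcal{B}\subseteq\{1,2\}^3$ be a basic set with associated $S_2$-SFT $X^{\mathcal{B}}$ and SNRE sequences $(a_n),(b_n)$, and let $c_n=a_n+b_n$. If the SNRE is of the cooperating type, with $c_n=c_{n-1}^2+g_{n-1}$, then $$h(X^{\mathcal{B}})=\frac14\Big[\ln c_1+\lim_{n\to\infty}\sum_{j=1}^{n-1}2^{-j}\ln\Big(1+\frac{g_j}{c_j^2}\Big)\Big].$$
   Context: $S_2$ is the free semigroup on two generators, identified with finite words over $\{1,2\}$ (root $\epsilon$). Alphabet $\mathcal{A}=\{1,2\}$; a basic set $\mathcal{B}\subseteq\mathcal{A}^3$ is a set of admissible 2-blocks $(i,i_1,i_2)$, $X^{\mathcal{B}}$ the associated $S_2$-SFT. $a_n$ (resp. $b_n$) is the number of maps $u$ from words of length $\le n$ to $\mathcal{A}$ with $(u(w),u(w1),u(w2))\in\mathcal{B}$ for all words $w$ of length $\le n-1$ and $u(\epsilon)=1$ (resp. $2$); equivalently $a_0=b_0=1$, $a_n=F^{(a)}(a_{n-1},b_{n-1})$, $b_n=F^{(b)}(a_{n-1},b_{n-1})$ with $F^{(a)}(x,y)=\sum_{(1,i,j)\in\mathcal{B}}z_iz_j$, $F^{(b)}(x,y)=\sum_{(2,i,j)\in\mathcal{B}}z_iz_j$, $z_1=x,z_2=y$. Entropy: $h(X^{\mathcal{B}})=\limsup_{n}\frac{\ln(a_n+b_n)}{2^{n+1}-1}$ (known to be a limit). The SNRE is of cooperating type if $c_n=c_{n-1}^2+g_{n-1}$ for all $n\ge2$,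 where $g_{m}=G(a_m,b_m)$ for a polynomial $G$ with nonnegative integer coefficients, and $g_m\le c_m^2$ for all $m$. *)

From Stdlib Require Import Reals Arith List.
From Coquelicot Require Import Coquelicot.
Import ListNotations.
Open Scope R_scope.

(* A basic set B ⊆ {1,2}^3 is given by a boolean predicate on triples of
   naturals; only its values on {1,2}^3 are ever consulted. *)
Definition basic_set := nat -> nat -> nat -> bool.

Definition zsel (i x y : nat) : nat := if Nat.eqb i 1 then x else y.

Definition Fpoly (B : basic_set) (k x y : nat) : nat :=
  fold_right Nat.add 0%nat
    (map (fun ij : nat * nat =>
            if B k (fst ij) (snd ij) then (zsel (fst ij) x y * zsel (snd ij) x y)%nat
            else 0%nat)
         [(1,1); (1,2); (2,1); (2,2)]%nat).

Fixpoint snre (B : basic_set) (n : nat) : nat * nat :=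
  match n with
  | O => (1%nat, 1%nat)
  | S m => let (x, y) := snre B m in (Fpoly B 1 x y, Fpoly B 2 x y)
  end.

Definition a_seq (B : basic_set) (n : nat) : nat := fst (snre B n).
Definition b_seq (B : basic_set) (n : nat) : nat := snd (snre B n).
Definition c_seq (B : basic_set) (n : nat) : nat := (a_seq B n + b_seq B n)%nat.

Definition entropy (B : basic_set) : Rbar :=
  LimSup_seq (fun n => ln (INR (c_seq B n)) / (2 ^ (S n) - 1)).

(* A polynomial in two variables with nonnegative integer coefficients,
   given as a list of monomials (coefficient, exponent of x, exponent of y). *)
Definition natpoly2 := list (nat * nat * nat).

Definition eval_natpoly2 (G : natpoly2) (x y : nat) : nat :=
  fold_right Nat.add 0%nat
    (map (fun m : nat * nat * nat =>
            let '(c, i, j) := m in (c * x ^ i * y ^ j)%nat) G).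

Definition cooperating (B : basic_set) (G : natpoly2) : Prop :=
  (forall n : nat, (2 <= n)%nat ->
     c_seq B n = (c_seq B (n - 1) ^ 2 + eval_natpoly2 G (a_seq B (n - 1)) (b_seq B (n - 1)))%nat)
  /\ (forall m : nat, (eval_natpoly2 G (a_seq B m) (b_seq B m) <= c_seq B m ^ 2)%nat).

Definition g_seq (B : basic_set) (G : natpoly2) (m : nat) : nat :=
  eval_natpoly2 G (a_seq B m) (b_seq B m).

Definition Rsum_range (m k : nat) (f : nat -> R) : R :=
  fold_right Rplus 0 (map f (seq m k)).

From Stdlib Require Import Reals List Lia Lra.
From Coquelicot Require Import Coquelicot.
Open Scope R_scope.

(* Writing u_n = ln c_n, the cooperating recurrence c_(n+1) = c_n^2 + g_n reads
   u_(n+1) = 2 u_n + d_n with d_n = ln (1 + g_n / c_n^2) in [0, ln 2].  Unfolding it,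
   u_(n+1) = 2^n (u_1 + sum_(j=1)^n 2^-j d_j); the weighted sum converges to some L
   because its terms are nonnegative and bounded by ln 2 / 2^j, so
   u_n / (2^(n+1) - 1) tends to (u_1 + L) / 4, which is then also the limsup. *)

Lemma Rsum_range_S (m k : nat) (f : nat -> R) :
  Rsum_range m (S k) f = Rsum_range m k f + f (m + k)%nat.
Proof.
  unfold Rsum_range. rewrite seq_S, map_app, fold_right_app; simpl.
  induction (map f (seq m k)) as [|x l IHl]; simpl; lra.
Qed.

Lemma ln_0 : ln 0 = 0.
Proof.
  unfold ln. case (Rlt_dec 0 0); intro h; [destruct (Rlt_irrefl 0 h) | reflexivity].
Qed.

Lemma ln_sqr_add (x y : R) :
  0 < x -> 0 <= y -> ln (x ^ 2 + y) = 2 * ln x + ln (1 + y / x ^ 2).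
Proof.
  intros Hx Hy.
  assert (Hx2 : 0 < x ^ 2) by (apply pow_lt; exact Hx).
  assert (Hq : 0 < 1 + y / x ^ 2).
  { assert (0 <= y / x ^ 2) by (apply Rdiv_le_0_compat; lra). lra. }
  replace (x ^ 2 + y) with (x ^ 2 * (1 + y / x ^ 2)) by (field; lra).
  rewrite ln_mult, ln_pow by assumption. simpl. ring.
Qed.

Section DoublingRecurrence.

Variables u d : nat -> R.
Hypothesis u_S : forall n : nat, (1 <= n)%nat -> u (S n) = 2 * u n + d n.

Let T (k : nat) : R := Rsum_range 1 k (fun j => / 2 ^ j * d j).

Lemma doubling_closed_form (k : nat) : u (S k) = 2 ^ k * (u 1%nat + T k).
Proof.
  induction k as [|k IHk].
  - unfold T, Rsum_range. simpl. ring.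
  - unfold T. rewrite u_S, Rsum_range_S by lia. fold (T k). rewrite IHk.
    simpl. field. apply pow_nonzero. lra.
Qed.

Lemma is_lim_seq_doubling_ratio (L : R) :
  is_lim_seq T L ->
  is_lim_seq (fun n => u n / (2 ^ S n - 1)) (/ 4 * (u 1%nat + L)).
Proof.
  intros HL. apply is_lim_seq_incr_1.
  apply is_lim_seq_ext with (u := fun k => (u 1%nat + T k) / (4 - (/ 2) ^ k)).
  { intro k. rewrite (doubling_closed_form k), pow_inv.
    assert (1 <= 2 ^ k) by (apply pow_R1_Rle; lra).
    replace (2 ^ S (S k)) with (4 * 2 ^ k) by (simpl; ring).
    field. lra. }
  replace (/ 4 * (u 1%nat + L)) with ((u 1%nat + L) / (4 - 0)) by field.
  apply is_lim_seq_div'.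
  - apply is_lim_seq_plus'; [apply is_lim_seq_const | exact HL].
  - apply is_lim_seq_minus'; [apply is_lim_seq_const |].
    apply is_lim_seq_geom. rewrite Rabs_pos_eq; lra.
  - lra.
Qed.

End DoublingRecurrence.

Lemma ex_lim_seq_halving_sum (d : nat -> R) (M : R) :
  (forall j : nat, 0 <= d j <= M) ->
  exists L : R, is_lim_seq (fun k => Rsum_range 1 k (fun j => / 2 ^ j * d j)) L.
Proof.
  intros Hd.
  set (T k := Rsum_range 1 k (fun j => / 2 ^ j * d j)).
  assert (T_S : forall k, T (S k) = T k + / 2 ^ S k * d (S k)).
  { intro k. unfold T. rewrite Rsum_range_S. reflexivity. }
  assert (term_ge0 : forall k, 0 <= / 2 ^ S k * d (S k)).
  { intro k. apply Rmult_le_pos; [|apply Hd].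
    apply Rlt_le, Rinv_0_lt_compat, pow_lt. lra. }
  assert (T_le : forall k, T k <= M * (1 - / 2 ^ k)).
  { induction k as [|k IHk].
    - unfold T, Rsum_range. simpl. lra.
    - rewrite T_S. destruct (Hd (S k)). simpl in *. rewrite Rinv_mult in *.
      assert (0 < / 2 ^ k) by (apply Rinv_0_lt_compat, pow_lt; lra).
      nra. }
  destruct (ex_finite_lim_seq_incr T M) as [L HL].
  - intro k. rewrite T_S. specialize (term_ge0 k). lra.
  - intro k. specialize (T_le k). destruct (Hd 0%nat).
    assert (0 < / 2 ^ k) by (apply Rinv_0_lt_compat, pow_lt; lra). nra.
  - exists L. exact HL.
Qed.

Lemma c_seq_eq0_S (B : basic_set) (n : nat) :
  c_seq B n = 0%nat -> c_seq B (S n) = 0%nat.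
Proof.
  unfold c_seq, a_seq, b_seq. simpl. destruct (snre B n) as [x y]. simpl.
  intros Hxy. replace x with 0%nat by lia. replace y with 0%nat by lia.
  unfold Fpoly, zsel. simpl.
  destruct (B 1%nat 1%nat 1%nat), (B 1%nat 1%nat 2%nat), (B 1%nat 2%nat 1%nat),
    (B 1%nat 2%nat 2%nat), (B 2%nat 1%nat 1%nat), (B 2%nat 1%nat 2%nat),
    (B 2%nat 2%nat 1%nat), (B 2%nat 2%nat 2%nat); reflexivity.
Qed.

(* If some c_n vanishes, every later term vanishes too and the identity holds
   only through the junk value [ln 0 = 0]. *)
Lemma ln_c_seq_S (B : basic_set) (G : natpoly2) :
  cooperating B G -> forall n : nat, (1 <= n)%nat ->
  ln (INR (c_seq B (S n))) =
    2 * ln (INR (c_seq B n)) + ln (1 + INR (g_seq B G n) / INR (c_seq B n) ^ 2).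
Proof.
  intros [c_rec _] n Hn.
  assert (E : c_seq B (S n) = (c_seq B n ^ 2 + g_seq B G n)%nat).
  { rewrite c_rec by lia. replace (S n - 1)%nat with n by lia. reflexivity. }
  destruct (Nat.eq_dec (c_seq B n) 0) as [Z|Z].
  - assert (Z' := c_seq_eq0_S B n Z).
    assert (Hg : g_seq B G n = 0%nat) by (rewrite Z, Z' in E; simpl in E; lia).
    rewrite Z, Z', Hg. simpl. rewrite ln_0, Rdiv_0_l, Rplus_0_r, ln_1. ring.
  - rewrite E, plus_INR, pow_INR.
    apply ln_sqr_add; [apply lt_0_INR; lia | apply pos_INR].
Qed.

Lemma ln_cooperation_factor_bounds (B : basic_set) (G : natpoly2) :
  cooperating B G -> forall j : nat,
  0 <= ln (1 + INR (g_seq B G j) / INR (c_seq B j) ^ 2) <= ln 2.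
Proof.
  intros [_ g_le] j.
  assert (Hq : 0 <= INR (g_seq B G j) / INR (c_seq B j) ^ 2 <= 1).
  { destruct (Nat.eq_dec (c_seq B j) 0) as [Z|Z].
    - rewrite Z. simpl. rewrite Rmult_0_l, Rdiv_0_r. lra.
    - assert (Hc2 : 0 < INR (c_seq B j) ^ 2) by (apply pow_lt, lt_0_INR; lia).
      assert (Hg : INR (g_seq B G j) <= INR (c_seq B j) ^ 2).
      { rewrite <- pow_INR. apply le_INR, g_le. }
      pose proof (pos_INR (g_seq B G j)).
      split; [apply Rdiv_le_0_compat; lra | exact (proj1 (Rdiv_le_1 _ _ Hc2) Hg)]. }
  split.
  - rewrite <- ln_1. apply ln_le; lra.
  - apply ln_le; lra.
Qed.

Theorem proposition4 (B : basic_set) (G : natpoly2) :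
  cooperating B G ->
  exists L : R,
    is_lim_seq
      (fun n : nat =>
         Rsum_range 1 (n - 1)
           (fun j : nat => / 2 ^ j *
              ln (1 + INR (g_seq B G j) / (INR (c_seq B j)) ^ 2)))
      L
    /\ entropy B = Finite (/ 4 * (ln (INR (c_seq B 1)) + L)).
Proof.
  intros coop.
  set (d j := ln (1 + INR (g_seq B G j) / INR (c_seq B j) ^ 2)).
  destruct (ex_lim_seq_halving_sum d (ln 2) (ln_cooperation_factor_bounds B G coop))
    as [L HL].
  exists L. split.
  - apply is_lim_seq_incr_1. apply is_lim_seq_ext with (2 := HL).
    intro n. simpl. rewrite Nat.sub_0_r. reflexivity.
  - unfold entropy. apply is_LimSup_seq_unique, is_lim_LimSup_seq.
    exact (is_lim_seq_doubling_ratio _ d (ln_c_seq_S B G coop) L HL).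
Qed.
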